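(* Let $H$ be a $d\times d$ Hermitian matrix with exactly $K$ distinct eigenvalues $\lambda_1,\dots,\lambda_K$, and let $\mathcal{L}=i\,\mathrm{ad}_H$, i.e. $\mathcal{L}(\rho)=i[H,\rho]$. Then there exist a Hermitian-preserving trace-preserving (HPTP) linear map $\mathcal{P}$ from operators on $\mathbb{C}^d\otimes\mathbb{C}^K$ to operators on $\mathbb{C}^d$ and a family of program states $(\pi_t)_{t\ge0}$ on $\mathbb{C}^K$ such that $\mathcal{P}(\rho\otimes\pi_t)=e^{t\mathcal{L}}(\rho)$ for all $t\ge0$ and all $\rho$; that is, $\mathcal{L}$ can be exactly programmed by a quasi-sampling protocol with program states of dimension $K$.
   Context: $\mathrm{ad}_H=[H,\cdot]$. A quasi-sampling (quasi-quantum) programming protocol is a pair consisting of an HPTP retrieval map $\mathcal{P}$ and program states $\pi_t$ with $\mathcal{P}(\cdot\otimes\pi_t)=e^{t\mathcal{L}}$; HPTP maps are implemented in expectation by quasi-probability sampling of CPTP maps. *)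

From HB Require Import structures.
From mathcomp Require Import all_boot all_order all_algebra.
From mathcomp Require Import complex mxtens.
From mathcomp Require Import all_classical all_reals topology normedtype sequences.
Set Implicit Arguments. Unset Strict Implicit. Unset Printing Implicit Defensive.
Import Order.TTheory GRing.Theory Num.Theory.
Import numFieldNormedType.Exports.
Local Open Scope ring_scope.
Local Open Scope complex_scope.
Local Open Scope classical_set_scope.

Definition adjmx {R : rcfType} m n (A : 'M[R[i]]_(m, n)) : 'M[R[i]]_(n, m) :=
  \matrix_(i, j) (A j i)^*.

Definition hermmx {R : rcfType} n (A : 'M[R[i]]_n) : Prop := adjmx A = A.

Definition psdmx {R : rcfType} n (A : 'M[R[i]]_n) : Prop :=
  hermmx A /\ forall v : 'cV[R[i]]_n, 0 <= (adjmx v *m A *m v) 0 0.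

Definition density_mx {R : rcfType} n (A : 'M[R[i]]_n) : Prop :=
  psdmx A /\ \tr A = 1.

Definition num_distinct_eigenvalues {R : rcfType} n (H : 'M[R[i]]_n) (K : nat) : Prop :=
  exists s : seq R[i], [/\ uniq s, size s = K & forall a, eigenvalue H a <-> a \in s].

Definition iadH {R : rcfType} n (H : 'M[R[i]]_n) (rho : 'M[R[i]]_n) : 'M[R[i]]_n :=
  'i *: (H *m rho - rho *m H).

Definition expL_partial {R : rcfType} n (L : 'M[R[i]]_n -> 'M[R[i]]_n) (t : R)
  (rho : 'M[R[i]]_n) (N : nat) : 'M[R[i]]_n :=
  \sum_(k < N) ((t ^+ k / (k`!)%:R)%:C *: iter k L rho).

Definition mx_cvg_to {R : realType} m n (u : nat -> 'M[R[i]]_(m, n)) (l : 'M[R[i]]_(m, n)) : Prop :=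
  forall i j, ((fun N => complex.Re (u N i j) : R) @ \oo --> (complex.Re (l i j) : R)) /\
              ((fun N => complex.Im (u N i j) : R) @ \oo --> (complex.Im (l i j) : R)).

Definition is_expL {R : realType} n (L : 'M[R[i]]_n -> 'M[R[i]]_n) (t : R)
  (rho X : 'M[R[i]]_n) : Prop :=
  mx_cvg_to (expL_partial L t rho) X.

Definition HPTP {R : rcfType} m n (P : 'M[R[i]]_m -> 'M[R[i]]_n) : Prop :=
  (forall X, hermmx X -> hermmx (P X)) /\ (forall X, \tr (P X) = \tr X).

(* Write H = sum_a l_a P_a with the spectral projections P_a of its K distinct eigenvalues.
   Then L acts diagonally on the blocks P_a rho P_b, with eigenvalue i (l_a - l_b), so that
   e^{tL} rho = sum_{a,b} e^{i t (l_a - l_b)} P_a rho P_b; blockwise, the exponential series is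
   the series of cos and sin.  The phases e^{i t (l_a - l_b)} are K times the entries of the
   pure program state pi_t = w w^* / K with w = (e^{i t l_a})_a, so the map sending X to
   K sum_{a,b} P_a X_ab P_b, with X_ab the (a, b) block of X, retrieves e^{tL} rho from
   rho (x) pi_t.  This map is Hermitian-preserving, and a correction term along a fixed matrix
   unit makes it trace-preserving without changing it on the states rho (x) pi_t. *)

From HB Require Import structures.
From mathcomp Require Import all_boot all_order all_algebra.
From mathcomp Require Import complex mxtens.
From mathcomp Require Import all_classical all_reals topology normedtype sequences.
From mathcomp Require Import sesquilinear spectral trigo ring.
Import Order.TTheory GRing.Theory Num.Theory.
Import numFieldNormedType.Exports.
Local Open Scope ring_scope.
Local Open Scope complex_scope.
Set Implicit Arguments. Unset Strict Implicit. Unset Printing Implicit Defensive.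

Section ConjugateTranspose.
Variable R : rcfType.
Local Notation C := R[i].

Lemma adjmxK m n (A : 'M[C]_(m, n)) : adjmx (adjmx A) = A.
Proof. by apply/matrixP => i j; rewrite !mxE conjcK. Qed.

Lemma adjmxM m n p (A : 'M[C]_(m, n)) (B : 'M[C]_(n, p)) :
  adjmx (A *m B) = adjmx B *m adjmx A.
Proof.
apply/matrixP => i j; rewrite !mxE rmorph_sum; apply: eq_bigr => k _.
by rewrite !mxE rmorphM mulrC.
Qed.

Lemma adjmxD m n (A B : 'M[C]_(m, n)) : adjmx (A + B) = adjmx A + adjmx B.
Proof. by apply/matrixP => i j; rewrite !mxE rmorphD. Qed.

Lemma adjmxZ m n c (A : 'M[C]_(m, n)) : adjmx (c *: A) = Num.conj c *: adjmx A.
Proof. by apply/matrixP => i j; rewrite !mxE rmorphM. Qed.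

Lemma adjmx_sum m n I (r : seq I) (F : I -> 'M[C]_(m, n)) :
  adjmx (\sum_(i <- r) F i) = \sum_(i <- r) adjmx (F i).
Proof.
elim/big_rec2: _ => [|i x y _ <-]; last by rewrite adjmxD.
by apply/matrixP => i j; rewrite !mxE rmorph0.
Qed.

Lemma mxtrace_adjmx n (A : 'M[C]_n) : \tr (adjmx A) = Num.conj (\tr A).
Proof. by rewrite /mxtrace rmorph_sum; apply: eq_bigr => i _; rewrite mxE. Qed.

Lemma adjmx_delta n (i j : 'I_n) : adjmx (delta_mx i j : 'M[C]_n) = delta_mx j i.
Proof. by apply/matrixP => a b; rewrite !mxE rmorph_nat andbC. Qed.

Lemma adjmx_diag n (f : 'rV[C]_n) : adjmx (diag_mx f) = diag_mx (\row_i Num.conj (f 0 i)).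
Proof.
apply/matrixP => a b; rewrite !mxE eq_sym.
by have [->|_] := eqVneq b a; rewrite ?mulr1n ?mulr0n ?rmorph0.
Qed.

Lemma hermmx_hermsymmx n (A : 'M[C]_n) : hermmx A -> A \is hermsymmx.
Proof.
move=> A_herm; apply/is_hermitianmxP; rewrite expr0 scale1r.
by rewrite -[LHS]A_herm; apply/matrixP => i j; rewrite !mxE.
Qed.

End ConjugateTranspose.

Section SpectralCalculus.
Variables (R : rcfType) (n : nat) (A : 'M[R[i]]_n).
Local Notation C := R[i].
Local Notation U := (spectralmx A).

Definition spectral_calc (f : 'I_n -> C) : 'M[C]_n :=
  invmx U *m diag_mx (\row_i f i) *m U.

Lemma spectral_calcM f g :
  spectral_calc f *m spectral_calc g = spectral_calc (fun i => f i * g i).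
Proof.
rewrite /spectral_calc !mulmxA -(mulmxA _ U) mulmxV ?spectral_unit // mulmx1.
congr (_ *m _); rewrite -mulmxA; congr (_ *m _).
apply/matrixP => a b; rewrite mul_diag_mx !mxE.
by have [->|_] := eqVneq a b; rewrite ?mulr1n ?mulr0n ?mulr0.
Qed.

Lemma spectral_calc1 : spectral_calc (fun=> 1) = 1%:M.
Proof.
rewrite /spectral_calc (_ : diag_mx _ = 1%:M) ?mulmx1 ?mulVmx ?spectral_unit //.
by apply/matrixP => a b; rewrite !mxE eq_sym.
Qed.

Lemma spectral_calc_sum I (r : seq I) (F : I -> 'I_n -> C) :
  \sum_(a <- r) spectral_calc (F a) = spectral_calc (fun i => \sum_(a <- r) F a i).
Proof.
rewrite /spectral_calc -mulmx_suml -mulmx_sumr; congr (_ *m _ *m _).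
apply/matrixP => a b; rewrite summxE !mxE.
elim/big_rec2: _ => [|k x y _ ->]; first by rewrite mul0rn.
by rewrite !mxE mulrnDl.
Qed.

Lemma spectral_calcZ c f : c *: spectral_calc f = spectral_calc (fun i => c * f i).
Proof.
rewrite /spectral_calc scalemxAl scalemxAr; congr (_ *m _ *m _).
by apply/matrixP => a b; rewrite !mxE mulrnAr.
Qed.

Lemma adjmx_spectral_calc f : adjmx (spectral_calc f) = spectral_calc (fun i => Num.conj (f i)).
Proof.
have adjU : adjmx U = invmx U.
  by rewrite invmx_unitary ?spectral_unitarymx //; apply/matrixP => i j; rewrite !mxE.
rewrite /spectral_calc !adjmxM adjU -{2}adjU adjmxK adjmx_diag mulmxA.
by congr (_ *m diag_mx _ *m _); apply/matrixP => a b; rewrite !mxE.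
Qed.

Hypothesis A_normal : A \is normalmx.

Lemma spectral_calc_diag : A = spectral_calc (fun i => spectral_diag A 0 i).
Proof.
rewrite {1}(orthomx_spectralP A_normal) /spectral_calc; congr (_ *m diag_mx _ *m _).
by apply/matrixP => a b; rewrite !mxE ord1.
Qed.

Lemma eigenvalue_spectral_diag i : eigenvalue A (spectral_diag A 0 i).
Proof.
apply/eigenvalueP; exists (delta_mx 0 i *m U).
  rewrite [X in _ *m X]spectral_calc_diag /spectral_calc !mulmxA.
  rewrite -(mulmxA _ U) mulmxV ?spectral_unit // mulmx1 scalemxAl; congr (_ *m _).
  apply/matrixP => a b; rewrite mul_mx_diag !mxE ord1 eqxx /=.
  by have [->|] := eqVneq b i; rewrite ?mulr1 ?mulr0 ?mul1r ?mul0r.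
apply: contraTneq isT => /(congr1 (mulmx^~ (invmx U))).
rewrite mul0mx -mulmxA mulmxV ?spectral_unit // mulmx1 => /matrixP /(_ 0 i).
by rewrite !mxE !eqxx => /eqP; rewrite oner_eq0.
Qed.

End SpectralCalculus.

Section EigenProjections.
Variables (R : rcfType) (d : nat) (H : 'M[R[i]]_d) (s : seq R[i]).
Hypothesis H_herm : hermmx H.
Hypothesis s_uniq : uniq s.
Hypothesis s_eigen : forall a, eigenvalue H a <-> a \in s.
Local Notation C := R[i].
Local Notation D := (spectral_diag H 0).
Local Notation K := (size s).

Definition eigenproj (a : 'I_K) : 'M[C]_d := spectral_calc H (fun i => (D i == s`_a)%:R).

Definition eigval (a : 'I_K) : R := complex.Re s`_a.

Lemma mem_spectral_diag i : D i \in s.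
Proof.
by apply/s_eigen/eigenvalue_spectral_diag/hermitian_normalmx/hermmx_hermsymmx.
Qed.

Lemma ord_nth_inj (a b : 'I_K) : s`_a = s`_b -> a = b.
Proof. by move=> /eqP; rewrite nth_uniq // => /eqP/val_inj. Qed.

Lemma eigenproj_sum : \sum_a eigenproj a = 1%:M.
Proof.
rewrite spectral_calc_sum -(spectral_calc1 H); congr spectral_calc; apply: funext => i.
have Di_lt : (index (D i) s < K)%N by rewrite index_mem mem_spectral_diag.
rewrite (bigD1 (Ordinal Di_lt)) //= nth_index ?mem_spectral_diag // eqxx big1 ?addr0 //.
move=> a a_neq; case: eqP => // Di_eq; case/eqP: a_neq.
by apply: ord_nth_inj; rewrite /= -Di_eq nth_index ?mem_spectral_diag.
Qed.

Lemma eigenprojM a b : eigenproj a *m eigenproj b = (a == b)%:R *: eigenproj a.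
Proof.
rewrite /eigenproj spectral_calcM spectral_calcZ; congr spectral_calc; apply: funext => i.
have [<-|a_neq] := eqVneq a b; first by rewrite mul1r -natrM mulnb andbb.
rewrite mul0r -natrM mulnb; case: eqP => [Da|]; case: eqP => [Db|] //=.
by case/eqP: a_neq; apply: ord_nth_inj; rewrite -Da -Db.
Qed.

Lemma adjmx_eigenproj a : adjmx (eigenproj a) = eigenproj a.
Proof.
rewrite /eigenproj adjmx_spectral_calc; congr spectral_calc; apply: funext => i.
exact: rmorph_nat.
Qed.

Lemma eigval_spectral_diag (a : 'I_K) i : D i = s`_a -> (eigval a)%:C = D i.
Proof.
rewrite /eigval => <-; apply: RRe_real.
exact/mxOverP/hermitian_spectral_diag_real/hermmx_hermsymmx.
Qed.

Lemma mulmx_eigenproj a : H *m eigenproj a = (eigval a)%:C *: eigenproj a.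
Proof.
have H_normal := hermitian_normalmx (hermmx_hermsymmx H_herm).
rewrite [X in X *m _](spectral_calc_diag H_normal) spectral_calcM spectral_calcZ.
congr spectral_calc; apply: funext => i.
by case: eqP => [/eigval_spectral_diag ->|_]; rewrite ?mulr0 ?mulr1.
Qed.

Lemma eigenproj_mulmx a : eigenproj a *m H = (eigval a)%:C *: eigenproj a.
Proof.
have H_normal := hermitian_normalmx (hermmx_hermsymmx H_herm).
rewrite [X in _ *m X](spectral_calc_diag H_normal) spectral_calcM spectral_calcZ.
congr spectral_calc; apply: funext => i.
by case: eqP => [/eigval_spectral_diag ->|_]; rewrite ?mul0r ?mulr0 ?mul1r ?mulr1.
Qed.

Lemma size_eigenvalues_gt0 : (0 < d)%N -> (0 < K)%N.
Proof. by move=> d_gt0; have := mem_spectral_diag (Ordinal d_gt0); case: (s). Qed.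

End EigenProjections.

Section Retrieval.
Variables (R : rcfType) (d K : nat) (Pi : 'I_K -> 'M[R[i]]_d) (i0 : 'I_d).
Local Notation C := R[i].

Lemma mxtrace_tens m n (A : 'M[C]_m) (B : 'M[C]_n) : \tr (A *t B) = \tr A * \tr B.
Proof. by rewrite /mxtrace mulr_sum; apply: eq_bigr => k _; rewrite !mxE. Qed.

Definition tens_block (a b : 'I_K) (X : 'M[C]_(d * K)) : 'M[C]_d :=
  \matrix_(i, j) X (mxtens_index (i, a)) (mxtens_index (j, b)).

Definition block_sandwich (X : 'M[C]_(d * K)) : 'M[C]_d :=
  \sum_a \sum_b (K%:R : C) *: (Pi a *m tens_block a b X *m Pi b).

(* The correction term only enforces trace preservation: it vanishes on [rho *t pi] as soon as
   [K pi_aa = 1] for all [a] (see [retrieval_tens]). *)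
Definition retrieval (X : 'M[C]_(d * K)) : 'M[C]_d :=
  block_sandwich X + (\tr X - \tr (block_sandwich X)) *: delta_mx i0 i0.

Lemma block_sandwich_is_linear : linear block_sandwich.
Proof.
move=> c X Y; rewrite /block_sandwich scaler_sumr -big_split; apply: eq_bigr => a _.
rewrite scaler_sumr -big_split; apply: eq_bigr => b _.
have -> : tens_block a b (c *: X + Y) = c *: tens_block a b X + tens_block a b Y.
  by apply/matrixP => i j; rewrite !mxE.
by rewrite mulmxDr mulmxDl -scalemxAr -scalemxAl scalerDr !scalerA mulrC.
Qed.

Lemma retrieval_is_linear : linear retrieval.
Proof.
move=> c X Y; rewrite /retrieval block_sandwich_is_linear !mxtraceD !mxtraceZ.
rewrite scalerDr scalerA addrACA -scalerDl; congr (_ + _ *: _).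
by rewrite mulrBr opprD addrACA.
Qed.

Lemma mxtrace_retrieval X : \tr (retrieval X) = \tr X.
Proof.
have tr_delta : \tr (delta_mx i0 i0 : 'M[C]_d) = 1.
  by rewrite /mxtrace (bigD1 i0) //= mxE !eqxx big1 ?addr0 // => k /negbTE; rewrite mxE => ->.
by rewrite /retrieval mxtraceD mxtraceZ tr_delta mulr1 addrC subrK.
Qed.

Hypothesis Pi_herm : forall a, adjmx (Pi a) = Pi a.

Lemma adjmx_block_sandwich X : adjmx (block_sandwich X) = block_sandwich (adjmx X).
Proof.
rewrite /block_sandwich adjmx_sum exchange_big /=; apply: eq_bigr => b _.
rewrite adjmx_sum; apply: eq_bigr => a _.
rewrite adjmxZ rmorph_nat !adjmxM !Pi_herm mulmxA; congr (_ *: (_ *m _ *m _)).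
by apply/matrixP => i j; rewrite !mxE.
Qed.

Lemma adjmx_retrieval X : adjmx (retrieval X) = retrieval (adjmx X).
Proof.
rewrite /retrieval adjmxD adjmxZ adjmx_delta adjmx_block_sandwich.
by rewrite -adjmx_block_sandwich !mxtrace_adjmx rmorphB.
Qed.

Hypothesis Pi_sum : \sum_a Pi a = 1%:M.
Hypothesis Pi_mul : forall a b, Pi a *m Pi b = (a == b)%:R *: Pi a.

Lemma retrieval_tens (rho : 'M[C]_d) (pi : 'M[C]_K) :
  (forall a, K%:R * pi a a = 1) -> \tr pi = 1 ->
  retrieval (rho *t pi) = \sum_a \sum_b (K%:R * pi a b) *: (Pi a *m rho *m Pi b).
Proof.
move=> pi_diag pi_tr.
have sandwich_tens : block_sandwich (rho *t pi) =
    \sum_a \sum_b (K%:R * pi a b) *: (Pi a *m rho *m Pi b).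
  apply: eq_bigr => a _; apply: eq_bigr => b _.
  have -> : tens_block a b (rho *t pi) = pi a b *: rho.
    by apply/matrixP => i j; rewrite [LHS]mxE tensmxE [RHS]mxE mulrC.
  by rewrite -scalemxAr -scalemxAl scalerA.
have tr_sandwich : \tr (block_sandwich (rho *t pi)) = \tr rho.
  rewrite sandwich_tens raddf_sum.
  transitivity (\sum_a \tr (Pi a *m rho)); last first.
    by rewrite -raddf_sum -mulmx_suml Pi_sum mul1mx.
  apply: eq_bigr => a _; rewrite raddf_sum (bigD1 a) //= big1 => [|b /negbTE b_neq].
    by rewrite addr0 pi_diag scale1r mxtrace_mulC mulmxA Pi_mul eqxx scale1r.
  by rewrite mxtraceZ mxtrace_mulC mulmxA Pi_mul b_neq scale0r mul0mx mxtrace0 mulr0.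
by rewrite /retrieval tr_sandwich mxtrace_tens pi_tr mulr1 subrr scale0r addr0.
Qed.

End Retrieval.

HB.instance Definition _ (R : rcfType) d K (Pi : 'I_K -> 'M[R[i]]_d) i0 :=
  GRing.isLinear.Build _ _ _ _ (retrieval Pi i0) (retrieval_is_linear Pi i0).

Section Dynamics.
Variables (R : rcfType) (d K : nat) (H : 'M[R[i]]_d) (Pi : 'I_K -> 'M[R[i]]_d) (l : 'I_K -> R).
Hypothesis H_Pi : forall a, H *m Pi a = (l a)%:C *: Pi a.
Hypothesis Pi_H : forall a, Pi a *m H = (l a)%:C *: Pi a.
Hypothesis Pi_sum : \sum_a Pi a = 1%:M.
Local Notation C := R[i].

Lemma iadH_is_linear : linear (iadH H).
Proof.
move=> c A B; rewrite /iadH mulmxDr mulmxDl opprD addrACA scalerDr.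
by rewrite -scalemxAr -scalemxAl -scalerBr !scalerA mulrC.
Qed.

HB.instance Definition _ := GRing.isLinear.Build _ _ _ _ (iadH H) iadH_is_linear.

Lemma iadH_sandwich (rho : 'M[C]_d) a b :
  iadH H (Pi a *m rho *m Pi b) = ('i * (l a - l b)%:C) *: (Pi a *m rho *m Pi b).
Proof.
rewrite /iadH !mulmxA H_Pi -!mulmxA Pi_H -!scalemxAl -scalemxAr -scalemxAr.
by rewrite mulmxA -scalerBl scalerA rmorphB.
Qed.

Lemma iter_iadH k (rho : 'M[C]_d) : iter k (iadH H) rho =
  \sum_a \sum_b ('i * (l a - l b)%:C) ^+ k *: (Pi a *m rho *m Pi b).
Proof.
elim: k => [|k IHk] /=.
  rewrite -[LHS]mul1mx -[LHS]mulmx1 -Pi_sum !mulmx_suml; apply: eq_bigr => a _.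
  by rewrite mulmx_sumr; apply: eq_bigr => b _; rewrite scale1r.
rewrite IHk !linear_sum; apply: eq_bigr => a _; rewrite linear_sum; apply: eq_bigr => b _.
by rewrite linearZ /= iadH_sandwich scalerA exprSr.
Qed.

Lemma expL_partial_sandwich t (rho : 'M[C]_d) N : expL_partial (iadH H) t rho N =
  \sum_a \sum_b (\sum_(k < N) ('i * (t * (l a - l b))%:C) ^+ k / k`!%:R)
                 *: (Pi a *m rho *m Pi b).
Proof.
rewrite /expL_partial; under eq_bigr do rewrite iter_iadH scaler_sumr.
rewrite exchange_big; apply: eq_bigr => a _.
under eq_bigr do rewrite scaler_sumr.
rewrite exchange_big; apply: eq_bigr => b _.
rewrite scaler_suml; apply: eq_bigr => k _.
rewrite scalerA; congr (_ *: _).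
by rewrite rmorphM rmorphXn fmorphV rmorph_nat [in RHS]rmorphM !exprMn; ring.
Qed.

End Dynamics.

Section ComplexExponential.
Variable R : realType.
Local Notation C := R[i].
Local Notation Re := complex.Re.
Local Notation Im := complex.Im.
Local Open Scope classical_set_scope.

Lemma Re_sum I (r : seq I) (F : I -> C) : Re (\sum_(i <- r) F i) = \sum_(i <- r) Re (F i).
Proof. exact: (raddf_sum (@complex.Re R : Rcomplex R -> R)). Qed.

Lemma Im_sum I (r : seq I) (F : I -> C) : Im (\sum_(i <- r) F i) = \sum_(i <- r) Im (F i).
Proof. exact: (raddf_sum (@complex.Im R : Rcomplex R -> R)). Qed.

Definition cexp (x : R) : C := cos x +i* sin x.

Lemma cexp0 : cexp 0 = 1.
Proof. by rewrite /cexp cos0 sin0. Qed.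

Lemma cexpD x y : cexp (x + y) = cexp x * cexp y.
Proof. by rewrite /cexp cosD sinD; simpc; rewrite [sin x * _ + _]addrC. Qed.

Lemma conj_cexp x : (cexp x)^* = cexp (- x).
Proof. by rewrite /cexp cosN sinN. Qed.

Definition complex_cvg_to (u : nat -> C) (z : C) :=
  Re (u n) @[n --> \oo] --> Re z /\ Im (u n) @[n --> \oo] --> Im z.

Lemma complex_cvg_to_sum I (r : seq I) (u : I -> nat -> C) (z : I -> C) :
  (forall i, complex_cvg_to (u i) (z i)) -> complex_cvg_to (fun n => \sum_(i <- r) u i n) (\sum_(i <- r) z i).
Proof.
move=> uz; split; [under eq_fun do rewrite Re_sum; rewrite Re_sum
                  | under eq_fun do rewrite Im_sum; rewrite Im_sum];
  apply: cvg_big => // [|i _]; by [exact: add_continuous | case: (uz i)].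
Qed.

Lemma complex_cvg_toMr (u : nat -> C) z c : complex_cvg_to u z -> complex_cvg_to (fun n => u n * c) (z * c).
Proof.
have ReM (x y : C) : Re (x * y) = Re x * Re y - Im x * Im y by case: x; case: y.
have ImM (x y : C) : Im (x * y) = Re x * Im y + Im x * Re y by case: x; case: y.
case=> uRe uIm; split; under eq_fun do rewrite ?ReM ?ImM; rewrite ?ReM ?ImM.
  exact: cvgB (cvgMr_tmp uRe) (cvgMr_tmp uIm).
exact: cvgD (cvgMr_tmp uRe) (cvgMr_tmp uIm).
Qed.

Lemma i_expr_even m : ('i : C) ^+ m.*2 = ((-1) ^+ m)%:C.
Proof. by rewrite -mul2n exprM sqr_i rmorphXn rmorphN1. Qed.

Lemma Re_i_exprM k (y : R) : Re ('i ^+ k * y%:C) = (~~ odd k)%:R * (-1) ^+ k./2 * y.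
Proof.
have k_split := esym (odd_double_half k); move: (odd k) (k./2) k_split => b m ->.
case: b => /=; first by rewrite add1n exprS i_expr_even /=; ring.
by rewrite add0n i_expr_even -rmorphM /= mul1r.
Qed.

Lemma Im_i_exprM k (y : R) : Im ('i ^+ k * y%:C) = (odd k)%:R * (-1) ^+ k.-1./2 * y.
Proof.
have k_split := esym (odd_double_half k); move: (odd k) (k./2) k_split => b m ->.
case: b => /=; first by rewrite add1n exprS i_expr_even /= ?odd_double ?doubleK /=; ring.
by rewrite add0n i_expr_even -rmorphM /= !mul0r.
Qed.

Lemma exp_termE (x : R) k : ('i * x%:C) ^+ k / k`!%:R = 'i ^+ k * (x ^+ k / k`!%:R)%:C.
Proof. by rewrite rmorphM rmorphXn fmorphV rmorph_nat exprMn mulrA. Qed.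

Lemma complex_cvg_to_exp_series x :
  complex_cvg_to (fun N => \sum_(k < N) ('i * x%:C) ^+ k / k`!%:R) (cexp x).
Proof.
split.
- have -> : (fun N => Re (\sum_(k < N) ('i * x%:C) ^+ k / k`!%:R)) = series (cos_coeff x).
    apply: funext => N; rewrite /series /= Re_sum big_mkord; apply: eq_bigr => k _.
    by rewrite exp_termE Re_i_exprM /= !mulrA.
  by rewrite /= unlock; exact: is_cvg_series_cos_coeff.
have -> : (fun N => Im (\sum_(k < N) ('i * x%:C) ^+ k / k`!%:R)) = series (sin_coeff x).
  apply: funext => N; rewrite /series /= Im_sum big_mkord; apply: eq_bigr => k _.
  by rewrite exp_termE Im_i_exprM /= !mulrA.
by rewrite /= unlock; exact: is_cvg_series_sin_coeff.
Qed.

End ComplexExponential.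

Section MatrixConvergence.
Variables (R : realType) (m n : nat).
Local Notation C := R[i].

Lemma mx_cvg_to_sum I (r : seq I) (u : I -> nat -> 'M[C]_(m, n)) (X : I -> 'M[C]_(m, n)) :
  (forall a, mx_cvg_to (u a) (X a)) ->
  mx_cvg_to (fun N => \sum_(a <- r) u a N) (\sum_(a <- r) X a).
Proof.
move=> uX i j; change (complex_cvg_to (fun N => (\sum_(a <- r) u a N) i j) ((\sum_(a <- r) X a) i j)).
rewrite summxE; under eq_fun do rewrite summxE.
by apply: complex_cvg_to_sum => a; exact: uX.
Qed.

Lemma mx_cvg_toZ (c : nat -> C) z (A : 'M[C]_(m, n)) :
  complex_cvg_to c z -> mx_cvg_to (fun N => c N *: A) (z *: A).
Proof.
move=> cz i j; change (complex_cvg_to (fun N => (c N *: A) i j) ((z *: A) i j)).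
by rewrite mxE; under eq_fun do rewrite mxE; exact: complex_cvg_toMr.
Qed.

End MatrixConvergence.

Section ProgramState.
Variables (R : realType) (K : nat) (l : 'I_K -> R).
Local Notation C := R[i].

Definition phase_vec (t : R) : 'cV[C]_K := \col_a cexp (t * l a).

Definition program_state (t : R) : 'M[C]_K :=
  (K%:R)^-1 *: (phase_vec t *m adjmx (phase_vec t)).

Lemma program_stateE t a b : program_state t a b = (K%:R)^-1 * cexp (t * (l a - l b)).
Proof. by rewrite !mxE big_ord1 !mxE conj_cexp -cexpD mulrBr. Qed.

Lemma density_program_state t : (0 < K)%N -> density_mx (program_state t).
Proof.
move=> K_gt0; have K_neq0 : (K%:R : C) != 0 by rewrite pnatr_eq0 -lt0n.
split; first split.
- by rewrite /hermmx /program_state adjmxZ adjmxM adjmxK fmorphV rmorph_nat.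
- move=> v; rewrite /program_state -scalemxAr -scalemxAl mulmxA mxE.
  rewrite -(mulmxA (adjmx v *m phase_vec t)) -[adjmx (phase_vec t) *m v]adjmxK adjmxM adjmxK.
  rewrite mxE big_ord1 [adjmx _ 0 0]mxE.
  by apply: mulr_ge0; [rewrite invr_ge0 ler0n | exact: mul_conjC_ge0].
rewrite /program_state mxtraceZ mxtrace_mulC /mxtrace big_ord1 mxE.
under eq_bigr do rewrite !mxE conj_cexp -cexpD addNr cexp0.
by rewrite sumr_const card_ord mulVf.
Qed.

End ProgramState.

Theorem proposition3 (R : realType) (d K : nat) (hd : (0 < d)%N)
  (H : 'M[R[i]]_d) (hH : hermmx H) (hK : num_distinct_eigenvalues H K) :
  exists (P : {linear 'M[R[i]]_(d * K) -> 'M[R[i]]_d}) (pi : R -> 'M[R[i]]_K),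
    HPTP P /\
    (forall t : R, 0 <= t -> density_mx (pi t)) /\
    (forall (t : R) (rho : 'M[R[i]]_d), 0 <= t ->
       is_expL (iadH H) t rho (P (rho *t pi t))).
Proof.
case: hK => s [s_uniq <- s_eigen].
have K_gt0 := size_eigenvalues_gt0 hH s_eigen hd.
pose Pi := @eigenproj R d H s; pose l := @eigval R s.
have Pi_sum : \sum_a Pi a = 1%:M := eigenproj_sum hH s_uniq s_eigen.
exists (GRing.Linear.clone _ _ _ _ (retrieval Pi (Ordinal hd)) _), (program_state l).
split; [split|split].
- by move=> X X_herm; rewrite /hermmx adjmx_retrieval ?X_herm // => a; exact: adjmx_eigenproj.
- exact: mxtrace_retrieval.
- by move=> t _; exact: density_program_state.
move=> t rho _; have [_ pi_tr] := density_program_state l t K_gt0.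
have K_pi a b : (size s)%:R * program_state l t a b = cexp (t * (l a - l b)).
  by rewrite program_stateE mulrA mulfV ?mul1r // pnatr_eq0 -lt0n.
rewrite /= (retrieval_tens _ Pi_sum (eigenprojM H s_uniq)) //; last first.
  by move=> a; rewrite K_pi subrr mulr0 cexp0.
under eq_bigr do under eq_bigr do rewrite K_pi.
have := expL_partial_sandwich (mulmx_eigenproj hH) (eigenproj_mulmx hH) Pi_sum t rho.
rewrite /is_expL => /funext ->.
apply: mx_cvg_to_sum => a; apply: mx_cvg_to_sum => b; apply: mx_cvg_toZ.
exact: complex_cvg_to_exp_series.
Qed.
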